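(* Let $B\subseteq\mathbb{Z}_q^n$ satisfy $|B|\ge q^{n-b}$ for some $b\in\mathbb{N}$. Then for every $\mathbf{v}\in\mathbb{Z}_q^n$ and every integer $h$ with $b<h\le n$, $$\sum_{\mathbf{u}\in\mathbb{Z}_q^n:\ \|\mathbf{u}+\mathbf{v}\|_0=h}\frac{q^n}{|B|}\left|\widehat{\mathbf{1}_B}(\mathbf{u})\right|\le\left(\frac{2q^2e^2n}{h}\right)^{h/2}.$$
   Context: For $f:\mathbb{Z}_q^n\to\mathbb{C}$, $\widehat f(\mathbf{u})=q^{-n}\sum_{\mathbf{a}\in\mathbb{Z}_q^n}f(\mathbf{a})\omega^{-\mathbf{u}^\top\mathbf{a}}$ with $\omega=e^{2\pi i/q}$. $\mathbf{1}_B$ is the indicator function of $B$, and $\|\mathbf{u}\|_0$ is the number of nonzero coordinates of $\mathbf{u}$. *)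

From HB Require Import structures.
From mathcomp Require Import all_boot all_order all_algebra.
From mathcomp Require Import complex.
From mathcomp Require Import all_classical all_reals all_analysis.
Set Implicit Arguments. Unset Strict Implicit. Unset Printing Implicit Defensive.
Import Order.TTheory GRing.Theory Num.Theory.
Local Open Scope ring_scope.

(* Vectors of Z_q^n (q >= 2 is assumed in the theorem, so 'Z_q = Z/qZ). *)
Definition zvec (q n : nat) := 'rV['Z_q]_n.

Definition zdot (q n : nat) (u a : zvec q n) : 'Z_q := \sum_(i < n) u 0 i * a 0 i.

Definition hwt (q n : nat) (u : zvec q n) : nat := #|[set i : 'I_n | u 0 i != 0]|.

Definition omega (R : realType) (q : nat) : R[i] :=
  (cos (2 * pi / q%:R) +i* sin (2 * pi / q%:R))%C.

Definition fourier (R : realType) (q n : nat) (f : zvec q n -> R[i]) (u : zvec q n)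
  : R[i] :=
  ((q ^ n)%:R)^-1 * \sum_(a : zvec q n) f a * (omega R q) ^- (nat_of_ord (zdot u a)).

Definition indicZ (R : realType) (q n : nat) (B : {set zvec q n}) : zvec q n -> R[i] :=
  fun a => (a \in B)%:R.

Definition cabs (R : realType) (z : R[i]) : R :=
  Num.sqrt (complex.Re z ^+ 2 + complex.Im z ^+ 2).

From HB Require Import structures.
From mathcomp Require Import all_boot all_order all_algebra.
From mathcomp Require Import complex.
From mathcomp Require Import all_classical all_reals all_analysis.
From mathcomp Require Import ring lra.
Import Order.TTheory GRing.Theory Num.Theory.
Local Open Scope ring_scope.
Local Open Scope complex_scope.
Set Implicit Arguments. Unset Strict Implicit.

(* Write F for the Fourier transform of 1_B, Q = q^n, N = |B| and
   S = {u : ||u + v||_0 = h}.  The argument is an L2 argument.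
   1. a |-> omega^a is an additive character chi of Z_q that is
      nontrivial on every nonzero element; hence the character sums
      sum_u chi(u^T c) vanish for c <> 0 (orthogonality).
   2. Orthogonality gives Parseval: sum_u |F u|^2 = Q^-1 sum_a |f a|^2,
      which is N / Q for f = 1_B.
   3. Cauchy-Schwarz on S: (sum_S |F u|)^2 <= |S| N / Q.
   4. |S| <= C(n,h) q^h (choose the support, then the nonzero entries),
      and Q / N <= q^b <= q^h since N >= q^(n-b) and b < h.
   5. C(n,h) h^h <= (e n)^h, so ((Q/N) sum_S |F u|)^2 <= C(n,h) q^(2h)
      <= (2 q^2 e^2 n / h)^h; taking square roots gives the theorem. *)

Section AdditiveCharacter.
Variable R : realType.

Lemma cis_mul (x y : R) :
  (cos x +i* sin x) * (cos y +i* sin y) = cos (x + y) +i* sin (x + y).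
Proof. by rewrite cosD sinD /=; congr (_ +i* _); ring. Qed.

Lemma omegaX (q k : nat) : omega R q ^+ k =
  cos (k%:R * (2 * pi / q%:R)) +i* sin (k%:R * (2 * pi / q%:R)).
Proof.
elim: k => [|k IH]; first by rewrite expr0 mul0r cos0 sin0.
by rewrite exprS IH /omega cis_mul; congr (cos _ +i* sin _); rewrite -natr1; ring.
Qed.

Lemma omega_q (q : nat) : (0 < q)%N -> omega R q ^+ q = 1.
Proof.
move=> q_gt0; have q_neq0 : q%:R != 0 :> R by rewrite pnatr_eq0 -lt0n.
rewrite omegaX.
have -> : q%:R * (2 * pi / q%:R) = pi *+ 2 :> R by rewrite mulr2n; field.
by rewrite cos2pi sin2pi.
Qed.

(* omega is a primitive q-th root of unity: if omega^k = 1 with 0 < k < q,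
   then cos(x) = 1 for x = 2 pi k / q, i.e. sin(x/2) = 0 with 0 < x/2 < pi. *)
Lemma omega_neq1 (q k : nat) : (0 < k)%N -> (k < q)%N -> omega R q ^+ k != 1.
Proof.
move=> k_gt0 lt_kq; rewrite omegaX; apply/negP => /eqP [cos_x _].
set x := _ * _ in cos_x.
have q_gt0 : 0 < q%:R :> R by rewrite ltr0n (leq_ltn_trans _ lt_kq).
have half_x : 0 < x / 2 < pi.
  have -> : x / 2 = pi * (k%:R / q%:R) by rewrite /x; field; rewrite gt_eqF.
  rewrite mulr_gt0 ?pi_gt0 ?divr_gt0 // ?ltr0n //=.
  by rewrite -[ltRHS]mulr1 ltr_pM2l ?pi_gt0 // ltr_pdivrMr // mul1r ltr_nat.
have sin_sqr0 : sin (x / 2) ^+ 2 = 0.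
  have : cos x = cos (x / 2 + x / 2) by congr cos; field.
  by rewrite cosD cos_x -!expr2 cos2sin2; lra.
by have := sin_gt0_pi half_x; move/eqP: sin_sqr0; rewrite sqrf_eq0 => /eqP ->; rewrite ltxx.
Qed.

Lemma omega_conj (q : nat) : omega R q * (omega R q)^*%C = 1.
Proof.
rewrite /omega /=; congr (_ +i* _); last by ring.
by rewrite mulrN opprK -!expr2 cos2Dsin2.
Qed.

Definition chi (q : nat) (x : 'Z_q) : R[i] := omega R q ^+ (nat_of_ord x).

Variables (q : nat) (hq : (1 < q)%N).

Lemma chi0 : chi (0 : 'Z_q) = 1.
Proof. by rewrite /chi expr0. Qed.

Lemma chiD (x y : 'Z_q) : chi (x + y) = chi x * chi y.
Proof.
have omega_trunc : omega R q ^+ (Zp_trunc q).+2 = 1 by rewrite Zp_cast // omega_q // ltnW.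
by rewrite /chi /= (expr_mod _ omega_trunc) exprD.
Qed.

Lemma chiN (x : 'Z_q) : chi (- x) = (chi x)^-1.
Proof. by apply/esym/mulr1_eq; rewrite -chiD subrr chi0. Qed.

Lemma chi_eq1 (x : 'Z_q) : chi x = 1 -> x = 0.
Proof.
have [//|x_neq0 chi_x] := eqVneq x 0; exfalso; move: chi_x; apply/eqP.
have x_gt0 : (0 < nat_of_ord x)%N.
  by rewrite lt0n; apply: contra x_neq0 => /eqP x0; apply/eqP/val_inj.
by apply: omega_neq1 x_gt0 _; rewrite -[q in (_ < q)%N]Zp_cast // ltn_ord.
Qed.

Lemma chi_conj (x : 'Z_q) : (chi x)^*%C = (chi x)^-1.
Proof.
have omega_inv : (omega R q)^*%C = (omega R q)^-1 by apply/esym/mulr1_eq/omega_conj.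
by rewrite /chi -exprVn -omega_inv rmorphXn.
Qed.

End AdditiveCharacter.

Section CharacterSums.
Variables (R : realType) (q n : nat) (hq : (1 < q)%N).
Implicit Types (u a c : zvec q n).

Lemma zdotDl u u' a : zdot (u + u') a = zdot u a + zdot u' a.
Proof. by rewrite /zdot -big_split; apply: eq_bigr => i _; rewrite mxE mulrDl. Qed.

Lemma zdotBr u a a' : zdot u (a - a') = zdot u a - zdot u a'.
Proof. by rewrite /zdot -sumrB; apply: eq_bigr => i _; rewrite !mxE mulrBr. Qed.

Lemma zdot0r u : zdot u 0 = 0.
Proof. by rewrite /zdot big1 // => i _; rewrite mxE mulr0. Qed.

Lemma zdot_delta j a : zdot (delta_mx 0 j) a = a 0 j.
Proof.
rewrite /zdot (bigD1 j) //= big1 ?addr0; first by rewrite mxE !eqxx mul1r.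
by move=> i /negPf neq_ij; rewrite mxE neq_ij andbF mul0r.
Qed.

(* Orthogonality: sum_u chi(u^T c) is q^n if c = 0 and 0 otherwise.
   For c 0 j <> 0, translating u by the j-th unit vector multiplies the
   sum by chi(c 0 j) <> 1. *)
Lemma char_sum c : \sum_u chi R (zdot u c) = (q ^ n)%:R * (c == 0)%:R.
Proof.
have [->|c_neq0] := eqVneq c 0.
  rewrite mulr1 (eq_bigr (fun _ => 1)) => [|u _]; last by rewrite zdot0r chi0.
  by rewrite sumr_const card_mx card_ord Zp_cast // mul1n.
have [j cj_neq0] : exists j, c 0 j != 0.
  case: (pickP (fun j => c 0 j != 0)) => [j cj|c0]; first by exists j.
  case/eqP: c_neq0; apply/matrixP => i k.
  by rewrite (ord1 i) mxE; move/negbFE/eqP: (c0 k).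
set S := \sum_u _; rewrite mulr0.
have S_invariant : S = S * chi R (c 0 j).
  rewrite /S mulr_suml [LHS](reindex_inj (addIr (delta_mx 0 j))) /=.
  by apply: eq_bigr => u _; rewrite zdotDl zdot_delta chiD.
have /eqP : S * (1 - chi R (c 0 j)) = 0 by rewrite mulrBr mulr1 -S_invariant subrr.
rewrite mulf_eq0 subr_eq0 => /orP [/eqP //|/eqP chi_cj].
by case/eqP: cj_neq0; apply: (chi_eq1 (R := R) hq); rewrite -chi_cj.
Qed.

End CharacterSums.

Section Parseval.
Variables (R : realType) (q n : nat) (hq : (1 < q)%N).
Let Q : R[i] := (q ^ n)%:R.

Lemma fourier_conj (f : zvec q n -> R[i]) u :
  (fourier f u)^*%C = Q^-1 * \sum_a (f a)^*%C * chi R (zdot u a).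
Proof.
rewrite /fourier rmorphM rmorph_sum /= conjc_inv conjc_nat; congr (_ * _).
apply: eq_bigr => a _; rewrite rmorphM /=; congr (_ * _).
by rewrite conjc_inv -/(chi R (zdot u a)) chi_conj // invrK.
Qed.

Lemma parseval (f : zvec q n -> R[i]) :
  \sum_u fourier f u * (fourier f u)^*%C = Q^-1 * \sum_a f a * (f a)^*%C.
Proof.
have Q_neq0 : Q != 0 by rewrite pnatr_eq0 expn_eq0 negb_and -lt0n ltnW.
have expand u : fourier f u * (fourier f u)^*%C =
    Q^-1 * Q^-1 * \sum_a \sum_a' f a * (f a')^*%C * chi R (zdot u (a' - a)).
  rewrite fourier_conj /fourier mulrACA mulr_suml; congr (_ * _).
  apply: eq_bigr => a _; rewrite mulr_sumr; apply: eq_bigr => a' _.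
  by rewrite zdotBr chiD // chiN // /chi; ring.
have diagonal a : \sum_u \sum_a' f a * (f a')^*%C * chi R (zdot u (a' - a))
    = f a * (f a)^*%C * Q.
  rewrite exchange_big (bigD1 a) //= [X in _ + X]big1 => [|a' neq_a'a].
    by rewrite -mulr_sumr char_sum // subrr eqxx mulr1 addr0.
  by rewrite -mulr_sumr char_sum // subr_eq0 (negPf neq_a'a) !mulr0.
under eq_bigr do rewrite expand.
rewrite -mulr_sumr exchange_big /=; under eq_bigr do rewrite diagonal.
by rewrite -mulr_suml; field.
Qed.

End Parseval.

Lemma cabs_ge0 (R : realType) (z : R[i]) : 0 <= cabs z.
Proof. exact: sqrtr_ge0. Qed.

Lemma cabs_sqr (R : realType) (z : R[i]) : (cabs z ^+ 2)%:C = z * z^*%C.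
Proof.
case: z => a b; rewrite /cabs /= sqr_sqrtr ?addr_ge0 ?sqr_ge0 //.
by congr (_ +i* _); ring.
Qed.

Lemma parseval_indicator (R : realType) (q n : nat) (hq : (1 < q)%N)
    (B : {set zvec q n}) :
  \sum_u cabs (fourier (indicZ R B) u) ^+ 2 = (#|B|)%:R / (q ^ n)%:R.
Proof.
have indic_sqr a : indicZ R B a * (indicZ R B a)^*%C = (a \in B)%:R.
  by rewrite /indicZ conjc_nat; case: (a \in B); rewrite ?mulr1 ?mulr0.
apply: (@complexI R); rewrite rmorph_sum /=.
under eq_bigr do rewrite cabs_sqr.
have card_B : \sum_a ((a \in B)%:R : R[i]) = #|B|%:R.
  rewrite (bigID (mem B)) /= [X in _ + X]big1 => [|a /negPf -> //].
  by rewrite addr0 (eq_bigr (fun _ => 1)) => [|a ->]; rewrite ?sumr_const.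
rewrite parseval //; under eq_bigr do rewrite indic_sqr.
by rewrite card_B mulrC rmorphM /= fmorphV /= !rmorph_nat.
Qed.

(* Cauchy-Schwarz for a finite sum: (sum_P x)^2 <= |P| sum_P x^2; it follows
   from the nonnegativity of the variance sum_P (x i - mean)^2. *)
Lemma sum_sqr_le (R : realFieldType) (I : finType) (P : pred I) (x : I -> R) :
  (\sum_(i | P i) x i) ^+ 2 <= #|P|%:R * \sum_(i | P i) x i ^+ 2.
Proof.
have [P0|P_gt0] := posnP #|P|.
  have P_empty i : P i = false by have := card0_eq P0 i.
  by rewrite !big_pred0 // expr0n /= P0 mul0r.
set s := \sum_(i | P i) x i; set A := \sum_(i | P i) x i ^+ 2.
set N : R := #|P|%:R; have N_gt0 : 0 < N by rewrite ltr0n.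
set t := s / N.
have variance : \sum_(i | P i) (x i - t) ^+ 2 = A - s * (2 * t) + t ^+ 2 * N.
  rewrite (eq_bigr (fun i => x i ^+ 2 - x i * (2 * t) + t ^+ 2)) => [|i _]; last by ring.
  by rewrite big_split sumrB /= -mulr_suml sumr_const mulr_natr.
have : 0 <= N * (A - s * (2 * t) + t ^+ 2 * N).
  rewrite -variance; apply: mulr_ge0; [exact: ltW | apply: sumr_ge0 => i _; apply: sqr_ge0].
have -> : N * (A - s * (2 * t) + t ^+ 2 * N) = N * A - s ^+ 2.
  by rewrite /t; field; rewrite gt_eqF.
lra.
Qed.

Lemma fourier_mass_sqr_le (R : realType) (q n : nat) (hq : (1 < q)%N)
    (B : {set zvec q n}) (P : pred (zvec q n)) :
  (\sum_(u | P u) cabs (fourier (indicZ R B) u)) ^+ 2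
    <= #|P|%:R * ((#|B|)%:R / (q ^ n)%:R).
Proof.
apply: le_trans (sum_sqr_le P _) _; rewrite ler_wpM2l ?ler0n //.
rewrite -(parseval_indicator R hq B) [leRHS](bigID P) /= lerDl.
by apply: sumr_ge0 => u _; apply: sqr_ge0.
Qed.

(* A vector w of Hamming weight h is determined by its support (an h-subset
   of 'I_n) and the list of its h nonzero entries; so the Hamming sphere of
   radius h around -v has at most C(n,h) q^h points. *)
Lemma card_hamming_sphere (q n h : nat) (hq : (1 < q)%N) (v : zvec q n) :
  (#|[pred u : zvec q n | hwt (u + v)%R == h]| <= 'C(n, h) * q ^ h)%N.
Proof.
pose supp (w : zvec q n) := [set i : 'I_n | w 0 i != 0].
pose entries (w : zvec q n) := [seq w 0 j | j <- enum (supp w)].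
pose code (u : zvec q n) : {set 'I_n} * {ffun 'I_h -> 'Z_q} :=
  (supp (u + v), [ffun i : 'I_h => nth 0 (entries (u + v)) i]).
set S := [pred u : zvec q n | hwt (u + v) == h].
have size_entries u : u \in S -> size (entries (u + v)) = h.
  by rewrite inE => /eqP wt_u; rewrite size_map -cardE.
have code_inj : {in S &, injective code}.
  move=> u1 u2 u1S u2S [eq_supp eq_fun]; apply: (addIr v).
  have eq_entries : entries (u1 + v) = entries (u2 + v).
    apply: (@eq_from_nth _ 0); first by rewrite !size_entries.
    move=> i; rewrite size_entries // => lt_ih.
    by have := congr1 (fun g : {ffun 'I_h -> 'Z_q} => g (Ordinal lt_ih)) eq_fun; rewrite !ffunE.
  move: eq_entries; rewrite /entries -eq_supp => /eq_in_map eq_on_supp.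
  apply/matrixP => i j; rewrite (ord1 i).
  have [j_supp|] := boolP (j \in supp (u1 + v)); first by apply: eq_on_supp; rewrite mem_enum.
  move=> j_out; have := j_out; rewrite {1}eq_supp inE => /negbNE/eqP ->.
  by move: j_out; rewrite inE => /negbNE/eqP.
rewrite -(card_in_imset code_inj).
have code_range : [set code u | u in S] \subset
    finset.setX [set A : {set 'I_n} | #|A| == h] [set: {ffun 'I_h -> 'Z_q}].
  by apply/fintype.subsetP => c /imsetP [u]; rewrite inE => wt_u ->; rewrite !inE andbT.
apply: leq_trans (subset_leq_card code_range) _.
by rewrite cardsX card_draws cardsT card_ffun !card_ord Zp_cast.
Qed.

(* h^h <= e^h h!, from the single term h^h / h! of the series of e^h. *)
Lemma pow_self_le_expR_fact (R : realType) (h : nat) :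
  (h%:R : R) ^+ h <= expR 1 ^+ h * h`!%:R.
Proof.
case: h => [|m]; first by rewrite !expr0 mul1r fact0.
have := expR_ge1Dxn m (ler0n R m.+1).
rewrite -[X in expR X]mulr1 expRM_natl => exp_ge.
have fact_gt0 : 0 < (m.+1)`!%:R :> R by rewrite ltr0n fact_gt0.
by rewrite -ler_pdivrMr //; lra.
Qed.

(* The classical estimate C(n,h) <= (e n / h)^h, in the form
   C(n,h) h^h <= n^h e^h; it uses C(n,h) h! = n^_h <= n^h. *)
Lemma binomial_pow_le (R : realType) (n h : nat) :
  ('C(n, h)%:R * (h%:R) ^+ h : R) <= (n%:R) ^+ h * (expR 1) ^+ h.
Proof.
have ffact_le m : (n ^_ m <= n ^ m)%N.
  by elim: m => [|m IH] //; rewrite ffactnSr expnSr leq_mul // leq_subr.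
have binom_fact : ('C(n, h)%:R * h`!%:R : R) <= (n%:R) ^+ h.
  by rewrite -natrM -natrX ler_nat bin_ffact ffact_le.
apply: le_trans (_ : 'C(n, h)%:R * (expR 1 ^+ h * h`!%:R) <= _).
  by rewrite ler_wpM2l // pow_self_le_expR_fact.
by rewrite mulrCA mulrC ler_wpM2r // exprn_ge0 // expR_ge0.
Qed.

Lemma binomial_sqr_pow_le (R : realType) (q n h : nat) : (0 < h)%N ->
  ('C(n, h))%:R * ((q%:R) ^+ 2) ^+ h
    <= ((2 * (q%:R) ^+ 2 * (expR 1) ^+ 2 * n%:R) / h%:R : R) ^+ h.
Proof.
move=> h_gt0; have h_pos : 0 < (h%:R : R) by rewrite ltr0n.
set K : R := (q%:R) ^+ 2 * (n%:R * expR 1 / h%:R).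
have -> : (2 * (q%:R) ^+ 2 * (expR 1) ^+ 2 * n%:R) / h%:R = K * (2 * expR 1).
  by rewrite /K; field; rewrite gt_eqF.
have two_le_e : 2 <= expR 1 :> R by have := expR_ge1Dx (1 : R); lra.
apply: le_trans (_ : _ <= K ^+ h) _.
  rewrite mulrC /K [leRHS]exprMn ler_wpM2l ?exprn_ge0 ?sqr_ge0 // expr_div_n.
  by rewrite ler_pdivlMr ?exprn_gt0 // exprMn binomial_pow_le.
rewrite [leRHS]exprMn ler_peMr ?exprn_ge0 ?exprn_ege1 //; last by lra.
by rewrite /K mulr_ge0 ?sqr_ge0 // divr_ge0 ?ler0n // mulr_ge0 ?ler0n ?expR_ge0.
Qed.

Lemma le_powR_half (R : realType) (x y : R) (h : nat) :
  0 <= x -> 0 <= y -> y ^+ 2 <= x ^+ h -> y <= powR x (h%:R / 2).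
Proof.
move=> x_ge0 y_ge0 le_sqr.
have powR_sqr : powR x (h%:R / 2) ^+ 2 = x ^+ h.
  rewrite -(powR_mulrn 2 (powR_ge0 _ _)) -powRrM.
  have -> : h%:R / 2 * 2 = h%:R :> R by field.
  exact: powR_mulrn.
by rewrite -ler_sqr ?nnegrE ?powR_ge0 // powR_sqr.
Qed.

Theorem lemma6p6 (R : realType) (q n : nat) (hq : (1 < q)%N)
  (B : {set zvec q n}) (b : nat) (hB : (q ^ (n - b) <= #|B|)%N)
  (v : zvec q n) (h : nat) (hbh : (b < h)%N) (hhn : (h <= n)%N) :
  \sum_(u : zvec q n | hwt (u + v) == h)
      ((q ^ n)%:R / (#|B|)%:R) * cabs (fourier (indicZ R B) u)
  <= powR ((2 * (q%:R) ^+ 2 * (expR 1) ^+ 2 * n%:R) / h%:R) (h%:R / 2).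
Proof.
have q_gt0 : (0 < q)%N := ltnW hq.
have B_gt0 : (0 < #|B|)%N by apply: leq_trans hB; rewrite expn_gt0 q_gt0.
have Q_le : (q ^ n <= #|B| * q ^ h)%N.
  have -> : (q ^ n = q ^ (n - b) * q ^ b)%N.
    by rewrite -expnD subnK // ltnW // (leq_trans hbh hhn).
  by rewrite leq_mul // leq_pexp2l // ltnW.
set N : R := (#|B|)%:R; set Q : R := (q ^ n)%:R.
have N_gt0 : 0 < N by rewrite ltr0n.
have Q_gt0 : 0 < Q by rewrite ltr0n expn_gt0 q_gt0.
set S := [pred u : zvec q n | hwt (u + v) == h].
rewrite -mulr_sumr; apply: le_powR_half.
- by rewrite divr_ge0 ?ler0n // !mulr_ge0 ?ler0n ?exprn_ge0 ?expR_ge0.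
- apply: mulr_ge0; first by rewrite divr_ge0 ?ltW.
  by apply: sumr_ge0 => u _; apply: cabs_ge0.
apply: le_trans (binomial_sqr_pow_le R q n (leq_ltn_trans (leq0n b) hbh)).
(* Cauchy-Schwarz and Parseval reduce the claim to |S| Q / N <= C(n,h) q^(2h). *)
rewrite exprMn; apply: le_trans (ler_wpM2l _ (fourier_mass_sqr_le R hq B S)) _.
  by rewrite exprn_ge0 // divr_ge0 ?ltW.
have -> : (Q / N) ^+ 2 * (#|S|%:R * (N / Q)) = #|S|%:R * (Q / N).
  by field; rewrite !gt_eqF.
rewrite mulrA ler_pdivrMr // /Q /N -!natrX -!natrM ler_nat.
apply: leq_trans (leq_mul (card_hamming_sphere h hq v) Q_le) _.
have regroup : ('C(n, h) * (q ^ 2) ^ h * #|B| = 'C(n, h) * q ^ h * (#|B| * q ^ h))%N.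
  by rewrite -expnM mul2n -addnn expnD; ring.
by rewrite regroup.
Qed.
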